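(* Let $k$ be a field, $M$ a regular matroid of rank $r$ on ground set $E=\{e_1,\ldots,e_n\}$ ordered by $e_1<\cdots<e_n$, with basis $B=\{e_{n-r+1},\ldots,e_n\}$, and let $\Theta^B=\{\theta_{e_j}: e_j\in B\}$ with $\theta_{e_j}=\sum_{e_i\in\mathrm{coc}(B,e_j)}a^*_{ji}x_i$ built from an admissible signed fundamental cocircuit incidence matrix $(a^*_{ji})$. For each circuit $C$ let $p_C\in k[x_1,\ldots,x_{n-r}]$ be the polynomial obtained from $\prod_{e_j\in\overline{C}}x_j$ by substituting, for each $j\ge n-r+1$, $x_j=-(a^*_{jj})^{-1}\sum_{e_i\in\mathrm{coc}(B,e_j),\,i\neq j}a^*_{ji}x_i$, and let $J(\Delta_{\mathrm{BC}}(M))=\langle p_C : C \text{ a circuit of } M\rangle\subseteq k[x_1,\ldots,x_{n-r}]$. Then, identifying $k[x_1,\ldots,x_n]/(\Theta^B)$ with $k[x_1,\ldots,x_{n-r}]$ via this substitution, $I_{\Delta_{\mathrm{BC}}(M)}+(\Theta^B)$ corresponds to $J(\Delta_{\mathrm{BC}}(M))$; in particular $$k[\Delta_{\mathrm{BC}}(M)]/(\Theta^B)\cong k[x_1,\ldots,x_{n-r}]/J(\Delta_{\mathrm{BC}}(M)).$$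
   Context: $\mathrm{coc}(B,b)$ for $b\in B$ is the unique cocircuit of $M$ contained in $(E\setminus B)\cup\{b\}$ and containing $b$; for $j\ge n-r+1$ one has $\mathrm{coc}(B,e_j)\setminus\{e_j\}\subseteq\{e_1,\ldots,e_{n-r}\}$. The fundamental cocircuit incidence matrix has rows indexed by the fundamental cocircuits $\mathrm{coc}(B,e_j)$, columns by $e_1,\ldots,e_n$, entry $1$ if $e_i\in\mathrm{coc}(B,e_j)$, else $0$. A signing replaces some $1$'s by $-1$; it is admissible over $k$ if it is the restriction to these rows of a signing of the full cocircuit incidence matrix (rows = all cocircuits) for which some signing of the circuit incidence matrix (rows = all circuits) satisfies $\widetilde{\mathcal{A}}_M(\mathcal{C})\widetilde{\mathcal{A}}_M(\mathcal{C}^* )^T=0$ over $k$. For a circuit $C$, $\overline{C}=C\setminus\{\min C\}$ is its broken circuit; $\Delta_{\mathrm{BC}}(M)$ is the complex of sets containing no broken circuit, and its Stanley–Reisner ideal is $I_{\Delta_{\mathrm{BC}}(M)}=\langle\prod_{e_i\in\overline{C}}x_i : C\text{ a circuit}\rangle\subseteq k[x_1,\ldots,x_n]$. *)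

From HB Require Import structures.
From mathcomp Require Import all_boot all_order all_algebra.
From mathcomp Require Import mpoly.

Set Implicit Arguments.
Unset Strict Implicit.
Unset Printing Implicit Defensive.

Import Order.TTheory GRing.Theory Num.Theory.
Local Open Scope ring_scope.

(* Ground set E = {e_1,...,e_n} is modelled by 'I_n, e_i <-> index i-1,
   with the natural order of 'I_n giving e_1 < ... < e_n. *)

Record matroid (n : nat) := Matroid {
  indep : {set 'I_n} -> bool;
  indep0 : indep set0;
  indep_sub : forall X Y : {set 'I_n}, X \subset Y -> indep Y -> indep X;
  indep_aug : forall X Y : {set 'I_n}, indep X -> indep Y -> (#|X| < #|Y|)%N ->
     exists2 y, y \in Y :\: X & indep (y |: X)
}.

Section MatroidNotions.
Variables (n : nat) (M : matroid n).

Definition is_basis (B : {set 'I_n}) : Prop :=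
  indep M B /\ forall X : {set 'I_n}, B \proper X -> ~~ indep M X.

Definition is_circuit (C : {set 'I_n}) : bool :=
  ~~ indep M C && [forall X : {set 'I_n}, (X \proper C) ==> indep M X].

Definition dual_indep (X : {set 'I_n}) : bool :=
  [exists B : {set 'I_n}, [&& indep M B,
     [forall Y : {set 'I_n}, (B \proper Y) ==> ~~ indep M Y] & X \subset ~: B]].

Definition is_cocircuit (D : {set 'I_n}) : bool :=
  ~~ dual_indep D && [forall X : {set 'I_n}, (X \proper D) ==> dual_indep X].

(* coc(B,b): the (unique, when B is a basis and b \in B) cocircuit contained
   in (E \ B) u {b} and containing b. *)
Definition coc (B : {set 'I_n}) (b : 'I_n) : {set 'I_n} :=
  odflt set0 [pick D : {set 'I_n} |
     [&& is_cocircuit D, D \subset (~: B) :|: [set b] & b \in D]].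

(* broken circuit: C minus its minimal element (w.r.t. the order of 'I_n) *)
Definition broken (C : {set 'I_n}) : {set 'I_n} :=
  [set i in C | [exists j in C, (j < i)%N]].

End MatroidNotions.

Definition represents (F : fieldType) (n d : nat) (M : matroid n)
    (A : 'M[F]_(n, d)) : Prop :=
  forall X : {set 'I_n},
    indep M X = row_free (rowsub (fun i : 'I_#|X| => @enum_val _ (mem X) i) A).

Definition regular (n : nat) (M : matroid n) : Prop :=
  forall F : fieldType, exists d (A : 'M[F]_(n, d)), represents M A.

Definition is_signing (n : nat) (S : pred {set 'I_n})
    (t : {set 'I_n} -> 'I_n -> int) : Prop :=
  forall D, S D -> forall i,
    if i \in D then (t D i == 1) || (t D i == -1) else t D i == 0.

(* The signed fundamental cocircuit incidence matrix a (rows j \in B give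
   coc(B,e_j)) is admissible over k: it is the restriction of a signing t of the
   full cocircuit incidence matrix for which some signing s of the circuit
   incidence matrix satisfies  s * t^T = 0  over k. *)
Definition admissible (k : fieldType) (n : nat) (M : matroid n)
    (B : {set 'I_n}) (a : 'I_n -> 'I_n -> int) : Prop :=
  exists s t : {set 'I_n} -> 'I_n -> int,
    [/\ is_signing (is_circuit M) s,
        is_signing (is_cocircuit M) t,
        (forall C D, is_circuit M C -> is_cocircuit M D ->
            \sum_(i < n) ((s C i)%:~R * (t D i)%:~R) = 0 :> k) &
        (forall j, j \in B -> forall i, a j i = t (coc M B j) i)].

Definition in_ideal (R : comRingType) (G : R -> Prop) (p : R) : Prop :=
  exists l : seq (R * R), (forall q, q \in l -> G q.2) /\
    p = \sum_(q <- l) q.1 * q.2.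

Section Objects.
Variables (k : fieldType) (n r : nat) (M : matroid n) (a : 'I_n -> 'I_n -> int).

Definition Bset : {set 'I_n} := [set i : 'I_n | n - r <= i]%N.

Definition theta (j : 'I_n) : {mpoly k[n]} :=
  \sum_(i in coc M Bset j) (a j i)%:~R *: 'X_i.

Definition ThetaB (p : {mpoly k[n]}) : Prop := exists2 j, j \in Bset & p = theta j.

Definition SRgen (p : {mpoly k[n]}) : Prop :=
  exists2 C, is_circuit M C & p = \prod_(i in broken C) 'X_i.

Definition low_var (i : 'I_n) : {mpoly k[n - r]} :=
  oapp (fun i' : 'I_(n - r) => 'X_i') 0 (insub (val i)).

Definition subst_val (j : 'I_n) : {mpoly k[n - r]} :=
  if (j < n - r)%N then low_var j
  else - ((a j j)%:~R)^-1 *: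
         \sum_(i in coc M Bset j | i != j) (a j i)%:~R *: low_var i.

Definition phi (p : {mpoly k[n]}) : {mpoly k[n - r]} :=
  mmap (@mpolyC _ k) subst_val p.

Definition Jgen (q : {mpoly k[n - r]}) : Prop :=
  exists2 C, is_circuit M C & q = phi (\prod_(i in broken C) 'X_i).

End Objects.

From HB Require Import structures.
From mathcomp Require Import all_boot all_order all_algebra.
From mathcomp Require Import mpoly ring.

Set Implicit Arguments.
Unset Strict Implicit.
Unset Printing Implicit Defensive.

Import Order.TTheory GRing.Theory Num.Theory.
Local Open Scope ring_scope.

(* For e_j in B, the fundamental cocircuit coc(B,e_j) meets B only in e_j, and
   a*_jj = +-1 is invertible; so theta_{e_j} is, up to a unit, x_j minus a
   linear form in the variables x_1..x_{n-r}.  Hence the substitution phi kills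
   Theta^B, and p is congruent modulo (Theta^B) to phi(p) read back in
   k[x_1..x_n].  Thus phi is onto with kernel (Theta^B), and the ideal
   correspondence for such a quotient map sends I + (Theta^B) to the ideal
   generated by the images of the generators of I, which is J. *)

Section FundamentalCocircuit.
Variables (n : nat) (M : matroid n) (B : {set 'I_n}) (j : 'I_n).
Hypotheses (basisB : is_basis M B) (jB : j \in B).

Lemma dual_dep_compl_basisU1 : ~~ dual_indep M (~: B :|: [set j]).
Proof.
have [indepB maxB] := basisB.
apply/existsP => -[B' /and3P [indepB' /forallP maxB' sub]].
have B'B : B' \proper B.
  apply/properP; split.
    apply/subsetP => x; apply: contraTT => xNB.
    by have := subsetP sub x; rewrite !inE xNB => /(_ isT).
  exists j => //; have := subsetP sub j.
  by rewrite !inE eqxx orbT => /(_ isT).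
by move: (maxB' B); rewrite B'B indepB.
Qed.

Lemma fundamental_cocircuit :
  [&& is_cocircuit M (coc M B j), coc M B j \subset ~: B :|: [set j]
    & j \in coc M B j].
Proof.
rewrite /coc; case: pickP => [D -> //|noD]; exfalso.
pose dep_in_S (D : {set 'I_n}) :=
  (D \subset ~: B :|: [set j]) && ~~ dual_indep M D.
have [D /minsetP [/andP [DS depD] minD]] : {D | minset dep_in_S D}.
  apply: ex_minset; exists (~: B :|: [set j]).
  by rewrite /dep_in_S subxx dual_dep_compl_basisU1.
have jD : j \in D.
  apply: contraNT depD => jND; apply/existsP; exists B.
  rewrite basisB.1; apply/and3P; split => //.
    by apply/forallP => Y; apply/implyP => /basisB.2.
  apply/subsetP => x xD; have := subsetP DS x xD; rewrite !inE.
  by case/orP => // /eqP xj; rewrite -xj xD in jND.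
move/negP: (noD D); apply; rewrite DS jD !andbT /is_cocircuit depD /=.
apply/forallP => X; apply/implyP => XD; apply: contraT => depX.
have dep_inX : dep_in_S X.
  by rewrite /dep_in_S depX andbT (subset_trans (proper_sub XD) DS).
have XeqD := minD X dep_inX (proper_sub XD).
by rewrite XeqD properxx in XD.
Qed.

End FundamentalCocircuit.

Section Ideal.
Variables (R : comNzRingType) (G : R -> Prop).

Lemma in_ideal0 : in_ideal G 0.
Proof. by exists [::]; rewrite big_nil. Qed.

Lemma in_idealD x y : in_ideal G x -> in_ideal G y -> in_ideal G (x + y).
Proof.
move=> [l1 [h1 ->]] [l2 [h2 ->]]; exists (l1 ++ l2); rewrite big_cat.
by split=> // q; rewrite mem_cat => /orP [/h1|/h2].
Qed.

Lemma in_idealMl y x : in_ideal G x -> in_ideal G (y * x).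
Proof.
move=> [l [h ->]]; exists [seq (y * q.1, q.2) | q <- l]; split.
  by move=> _ /mapP [q ql ->] /=; apply: h.
by rewrite big_map mulr_sumr; apply: eq_bigr => q _; rewrite mulrA.
Qed.

Lemma in_idealMr y x : in_ideal G x -> in_ideal G (x * y).
Proof. by rewrite mulrC; apply: in_idealMl. Qed.

Lemma in_idealN x : in_ideal G x -> in_ideal G (- x).
Proof. by rewrite -mulN1r; apply: in_idealMl. Qed.

Lemma in_ideal_gen g : G g -> in_ideal G g.
Proof. by exists [:: (1, g)]; rewrite big_seq1 mul1r; split=> // q /[!inE] /eqP->. Qed.

Lemma in_ideal_sub (G' : R -> Prop) x :
  (forall g, G g -> G' g) -> in_ideal G x -> in_ideal G' x.
Proof. by move=> GG' [l [h ->]]; exists l; split=> // q /h /GG'. Qed.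

End Ideal.

Lemma in_ideal_eq0 (R : comNzRingType) (x : R) : in_ideal (eq^~ 0) x -> x = 0.
Proof. by move=> [l [h ->]]; rewrite big_seq big1 // => q /h ->; rewrite mulr0. Qed.

Lemma in_ideal_rmorph (R S : comNzRingType) (f : {rmorphism R -> S})
    (G : R -> Prop) (H : S -> Prop) x :
  (forall g, G g -> in_ideal H (f g)) -> in_ideal G x -> in_ideal H (f x).
Proof.
move=> GH [l [h ->]]; rewrite rmorph_sum.
elim: l h => [|q l IHl] h; first by rewrite big_nil; apply: in_ideal0.
rewrite big_cons rmorphM; apply: in_idealD.
  by apply/in_idealMl/GH/h; rewrite mem_head.
by apply: IHl => q' q'l; apply: h; rewrite inE q'l orbT.
Qed.

Section MpolyRmorphCongr.
Variables (R S : comNzRingType) (m : nat).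
Variables f g : {rmorphism {mpoly R[m]} -> S}.

Lemma mpoly_rmorph_congr (G : S -> Prop) :
  (forall c, in_ideal G (f c%:MP - g c%:MP)) ->
  (forall i, in_ideal G (f 'X_i - g 'X_i)) ->
  forall p, in_ideal G (f p - g p).
Proof.
move=> congrC congrX.
pose congr_fg p := in_ideal G (f p - g p).
have congrM p q : congr_fg p -> congr_fg q -> congr_fg (p * q).
  move=> cp cq; rewrite /congr_fg !rmorphM.
  have -> : f p * f q - g p * g q = (f p - g p) * f q + (f q - g q) * g p by ring.
  by apply: in_idealD; apply: in_idealMr.
elim/mpolyind => [|c mon p _ _ cp].
  by rewrite /congr_fg !rmorph0 subrr; apply: in_ideal0.
have -> : f (c *: 'X_[mon] + p) - g (c *: 'X_[mon] + p)
          = (f (c *: 'X_[mon]) - g (c *: 'X_[mon])) + (f p - g p).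
  by rewrite !rmorphD; ring.
apply: in_idealD => //; rewrite -mul_mpolyC; apply: (congrM); first exact: congrC.
have congr1 : congr_fg 1 by rewrite /congr_fg !rmorph1 subrr; apply: in_ideal0.
rewrite mpolyXE_id; apply: (big_ind congr_fg) => // i _.
elim: (mon i) => [|e IHe]; rewrite ?expr0 ?exprS //.
by apply: (congrM) => //; apply: congrX.
Qed.

Lemma mpoly_rmorph_eq :
  (forall c, f c%:MP = g c%:MP) -> (forall i, f 'X_i = g 'X_i) -> f =1 g.
Proof.
move=> eqC eqX p; apply/eqP; rewrite -subr_eq0; apply/eqP/in_ideal_eq0.
by apply: mpoly_rmorph_congr => [c|i]; rewrite ?eqC ?eqX subrr; apply: in_ideal0.
Qed.

End MpolyRmorphCongr.

Section IdealCorrespondence.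
Variables (R S : comNzRingType) (f : {rmorphism R -> S}) (s : {rmorphism S -> R}).
Variable T : R -> Prop.
Hypotheses (fT : forall t, T t -> f t = 0)
           (congr_sf : forall x, in_ideal T (x - s (f x))).

Lemma rmorph_eq0_ideal x : f x = 0 <-> in_ideal T x.
Proof.
split=> [fx0|Tx]; first by have := congr_sf x; rewrite fx0 rmorph0 subr0.
apply: in_ideal_eq0; apply: in_ideal_rmorph Tx => t /fT ->; exact: in_ideal0.
Qed.

Lemma ideal_correspondence (G : R -> Prop) (H : S -> Prop) x :
  (forall g, G g -> H (f g)) -> (forall h, H h -> exists2 g, G g & h = f g) ->
  in_ideal (fun y => G y \/ T y) x <-> in_ideal H (f x).
Proof.
have congrGT y : in_ideal (fun z => G z \/ T z) (y - s (f y)).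
  by apply: in_ideal_sub (congr_sf y) => z; right.
move=> GH HG; split.
  apply: in_ideal_rmorph => y [/GH Hy|/fT ->]; first exact: in_ideal_gen.
  exact: in_ideal0.
move=> Hfx; rewrite -(subrK (s (f x)) x); apply: in_idealD => //.
apply: in_ideal_rmorph Hfx => _ /HG [y Gy ->].
rewrite -[s (f y)](subKr y); apply: in_idealD; first by apply: in_ideal_gen; left.
exact: in_idealN.
Qed.

End IdealCorrespondence.

Section Substitution.
Variables (k : fieldType) (n r : nat) (M : matroid n) (a : 'I_n -> 'I_n -> int).

Local Notation phi := (@phi k n r M a).
Local Notation theta := (@theta k n r M a).
Local Notation subst_val := (@subst_val k n r M a).
Local Notation low_var := (@low_var k n r).

HB.instance Definition _ := GRing.RMorphism.copy phi (mmap (@mpolyC _ k) subst_val).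

Definition widen_mpoly : {mpoly k[n - r]} -> {mpoly k[n]} :=
  mmap (@mpolyC _ k) (fun i : 'I_(n - r) => 'X_(widen_ord (leq_subr r n) i)).

HB.instance Definition _ := GRing.RMorphism.on widen_mpoly.

Lemma phiC c : phi c%:MP = c%:MP.
Proof. exact: mmapC. Qed.

Lemma phiX i : phi 'X_i = subst_val i.
Proof. by rewrite /phi mmapX mmap1U. Qed.

Lemma phiZ c p : phi (c *: p) = c *: phi p.
Proof. by rewrite /phi mmapZ mul_mpolyC. Qed.

Lemma widen_mpolyC c : widen_mpoly c%:MP = c%:MP.
Proof. exact: mmapC. Qed.

Lemma widen_mpolyX i : widen_mpoly 'X_i = 'X_(widen_ord (leq_subr r n) i).
Proof. by rewrite /widen_mpoly mmapX mmap1U. Qed.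

Lemma widen_mpolyZ c p : widen_mpoly (c *: p) = c *: widen_mpoly p.
Proof. by rewrite /widen_mpoly mmapZ mul_mpolyC. Qed.

Lemma low_varE (i : 'I_n) (ilt : (i < n - r)%N) : low_var i = 'X_(Ordinal ilt).
Proof. by rewrite /low_var insubT. Qed.

Lemma subst_val_low (i : 'I_n) : (i < n - r)%N -> subst_val i = low_var i.
Proof. by rewrite /subst_val => ->. Qed.

Lemma subst_val_high (j : 'I_n) : (n - r <= j)%N ->
  subst_val j = - ((a j j)%:~R)^-1 *:
    \sum_(i in coc M (Bset n r) j | i != j) (a j i)%:~R *: low_var i.
Proof. by rewrite /subst_val ltnNge => ->. Qed.

Lemma widen_low_var (i : 'I_n) : (i < n - r)%N -> widen_mpoly (low_var i) = 'X_i.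
Proof.
by move=> ilt; rewrite (low_varE ilt) widen_mpolyX; congr 'X_(_); apply: val_inj.
Qed.

Lemma phi_widen_mpoly q : phi (widen_mpoly q) = q.
Proof.
apply: (@mpoly_rmorph_eq _ _ _ (phi \o widen_mpoly) idfun) => [c|i] /=.
  by rewrite widen_mpolyC phiC.
have ilt : (widen_ord (leq_subr r n) i < n - r)%N := ltn_ord i.
rewrite widen_mpolyX phiX subst_val_low // (low_varE ilt).
by congr 'X_(_); apply: val_inj.
Qed.

Hypotheses (basisB : is_basis M (Bset n r)) (adm : admissible k M (Bset n r) a).

Lemma coc_Bset_low j i :
  j \in Bset n r -> i \in coc M (Bset n r) j -> i != j -> (i < n - r)%N.
Proof.
move=> jB icoc ij; have /and3P [_ sub _] := fundamental_cocircuit basisB jB.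
by have := subsetP sub i icoc; rewrite !inE (negbTE ij) orbF -ltnNge.
Qed.

(* a*_jj is a sign because e_j lies in the cocircuit coc(B,e_j). *)
Lemma admissible_diag_neq0 j : j \in Bset n r -> (a j j)%:~R != 0 :> k.
Proof.
move=> jB; have /and3P [cocD _ jcoc] := fundamental_cocircuit basisB jB.
have [s [t [_ sign_t _ ->//]]] := adm.
have := sign_t _ cocD j; rewrite jcoc => /orP [] /eqP ->.
  by rewrite oner_neq0.
by rewrite rmorphN rmorph1 oppr_eq0 oner_neq0.
Qed.

Lemma theta_split j : j \in Bset n r ->
  theta j = (a j j)%:~R *: 'X_j +
            \sum_(i in coc M (Bset n r) j | i != j) (a j i)%:~R *: 'X_i.
Proof.
move=> jB; have /and3P [_ _ jcoc] := fundamental_cocircuit basisB jB.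
by rewrite /theta (bigD1 j).
Qed.

Lemma phi_theta j : j \in Bset n r -> phi (theta j) = 0.
Proof.
move=> jB; have jge : (n - r <= j)%N by move: jB; rewrite inE.
rewrite theta_split // rmorphD raddf_sum /= phiZ phiX subst_val_high //.
rewrite scalerA mulrN mulfV ?admissible_diag_neq0 // scaleN1r addrC.
apply/eqP; rewrite subr_eq0; apply/eqP/eq_bigr => i /andP [icoc ij].
by rewrite phiZ phiX subst_val_low // (coc_Bset_low jB).
Qed.

Lemma widen_phi_congr p :
  in_ideal (@ThetaB k n r M a) (p - widen_mpoly (phi p)).
Proof.
apply: (@mpoly_rmorph_congr _ _ _ idfun (widen_mpoly \o phi)) => [c|j] /=.
  by rewrite phiC widen_mpolyC subrr; apply: in_ideal0.
rewrite phiX; have [jlt|jge] := ltnP j (n - r).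
  by rewrite subst_val_low // widen_low_var // subrr; apply: in_ideal0.
have jB : j \in Bset n r by rewrite inE.
suff -> : 'X_j - widen_mpoly (subst_val j) = ((a j j)%:~R^-1)%:MP * theta j.
  by apply/in_idealMl/in_ideal_gen; exists j.
rewrite theta_split // subst_val_high // widen_mpolyZ (raddf_sum widen_mpoly) mul_mpolyC.
rewrite scalerDr scalerA mulVf ?admissible_diag_neq0 // scale1r scaleNr opprK.
congr (_ + _ *: _); apply: eq_bigr => i /andP [icoc ij] /=.
by rewrite widen_mpolyZ widen_low_var // (coc_Bset_low jB).
Qed.

End Substitution.

Theorem proposition4p1 (k : fieldType) (n r : nat) (M : matroid n)
    (a : 'I_n -> 'I_n -> int) :
  regular M ->
  (r <= n)%N ->
  is_basis M (Bset n r) ->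
  admissible k M (Bset n r) a ->
  (* the substitution identifies k[x_1..x_n]/(Theta^B) with k[x_1..x_{n-r}] *)
  (forall q : {mpoly k[n - r]}, exists p : {mpoly k[n]}, @phi k n r M a p = q) /\
  (forall p : {mpoly k[n]},
      @phi k n r M a p = 0 <-> in_ideal (@ThetaB k n r M a) p) /\
  (* under it, I_{Delta_BC(M)} + (Theta^B) corresponds to J(Delta_BC(M)),
     i.e. k[Delta_BC(M)]/(Theta^B) = k[x]/(I + Theta) ~= k[x_1..x_{n-r}]/J *)
  (forall p : {mpoly k[n]},
      in_ideal (fun g => @SRgen k n M g \/ @ThetaB k n r M a g) p <->
      in_ideal (@Jgen k n r M a) (@phi k n r M a p)).
Proof.
(* Regularity only guarantees that admissible signings exist, and admissibility
   is assumed here. *)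
move=> _ _ basisB adm.
have phiTheta g : @ThetaB k n r M a g -> @phi k n r M a g = 0.
  by move=> [j jB ->]; apply: phi_theta.
have congr_widen := widen_phi_congr basisB adm.
split; first by move=> q; exists (@widen_mpoly k n r q); apply: phi_widen_mpoly.
split=> p; first exact: rmorph_eq0_ideal.
apply: ideal_correspondence => // [_ [C circC ->]|_ [C circC ->]].
  by exists C.
by exists (\prod_(i in broken C) 'X_i) => //; exists C.
Qed.
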